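(* Let $n\ge0$ and let $a\preccurlyeq b$ be vertices of $\square^n$ (i.e. subsets $a\subseteq b\subseteq\{1,\dots,n\}$). There is an isomorphism of preordered sets $\mathfrak{C}^{\square}_{path}(\square^n)(a,b)\to\Sigma_{b\setminus a}$, where $\Sigma_{b\setminus a}$ carries the weak Bruhat order $\leadsto_B$, and these isomorphisms are compatible with concatenation (for $a\preccurlyeq b\preccurlyeq c$, concatenation of paths corresponds to concatenation of sequences $\Sigma_{b\setminus a}\times\Sigma_{c\setminus b}\to\Sigma_{c\setminus a}$). Consequently the preorder $\leadsto$ on $\mathfrak{C}^{\square}_{path}(\square^n)(a,b)$ is a partial order, isomorphic to the weak Bruhat order.
   Context: Cubical sets: presheaves on the category $\square$ with objects $[1]^n$ and morphisms generated by faces $\partial_{i,\epsilon}$ (insert $\epsilon$ at coordinate $i$), degeneracies (delete a coordinate) and negative connections ($(x_i,x_{i+1})\mapsto\max(x_i,x_{i+1})$); $\square^n$ is representable, and its vertices are identified with subsets of $\{1,\dots,n\}$ ordered by inclusion $\preccurlyeq$. Paths: $I_m$ is $m$ copies of $\square^1$ glued end to start, with distinguished initial/terminal vertices. For $0\le k\le m-2$, $\mathbb{I}_{k,m}$ is $I_k$, $\square^2$, $I_{m-2-k}$ glued end to start (through the vertices $\emptyset$ and $\{1,2\}$ of $\square^2$); $s_{k,m},t_{k,m}:I_m\to\mathbb{I}_{k,m}$ are the identity on the first $k$ and last $m-2-k$ edges and send edges $k+1,k+2$ to $\emptyset\to\{2\}\to\{1,2\}$ (for $s$), resp. $\emptyset\to\{1\}\to\{1,2\}$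 (for $t$). For a cubical set $S$ with vertices $a,b$, $\mathfrak{C}^{\square}_{path}(S)(a,b)$ is the set of maps $\gamma:I_m\to S$ (any $m$) sending the initial vertex to $a$ and the terminal to $b$, modulo the equivalence relation generated by $\gamma\sim\gamma'$ when $\gamma=\gamma'\circ h$ for an endpoint-preserving $h:I_m\to I_{m'}$, preordered by the reflexive-transitive closure $\leadsto$ of $[F\circ s_{k,m}]\leadsto[F\circ t_{k,m}]$ for endpoint-preserving $F:\mathbb{I}_{k,m}\to S$. Composition is concatenation of paths. For a finite totally ordered set $A$ (here with order induced from $\{1,\dots,n\}$), $\Sigma_A$ is the set of sequences $(x_1,\dots,x_k)$ enumerating $A$ without repetition; the weak Bruhat order $\leadsto_B$ is the partial order generated by $(x_1,\dots,x_i,x_{i+1},\dots,x_k)\leadsto_B(x_1,\dots,x_{i+1},x_i,\dots,x_k)$ whenever $x_i>x_{i+1}$. *)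

From mathcomp Require Import all_boot.
From Stdlib Require Import Relations.
Set Implicit Arguments. Unset Strict Implicit. Unset Printing Implicit Defensive.

(** * The box category (faces, degeneracies, negative connections)
    Objects [1]^n are represented by their vertex sets [cube n]
    (coordinates are 0-indexed: coordinate i of the paper is index i-1);
    morphisms [1]^m -> [1]^n are the maps cube m -> cube n generated under
    composition by the three kinds of generators below. *)
Definition cube (n : nat) := {ffun 'I_n -> bool}.

Definition face (n : nat) (i : 'I_n.+1) (e : bool) (x : cube n) : cube n.+1 :=
  [ffun j : 'I_n.+1 => if unlift i j is Some k then x k else e].

Definition degen (n : nat) (i : 'I_n.+1) (x : cube n.+1) : cube n :=
  [ffun k : 'I_n => x (lift i k)].

Definition conn (n : nat) (i : 'I_n.+1) (x : cube n.+2) : cube n.+1 :=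
  [ffun j : 'I_n.+1 => if j == i then x (inord i) || x (inord i.+1)
                       else x (lift (inord i.+1) j)].

Inductive boxmap : forall m n : nat, (cube m -> cube n) -> Prop :=
| bm_id n : @boxmap n n (fun x => x)
| bm_face m n (i : 'I_n.+1) e f :
    @boxmap m n f -> @boxmap m n.+1 (fun x => face i e (f x))
| bm_degen m n (i : 'I_n.+1) f :
    @boxmap m n.+1 f -> @boxmap m n (fun x => degen i (f x))
| bm_conn m n (i : 'I_n.+1) f :
    @boxmap m n.+2 f -> @boxmap m n.+1 (fun x => conn i (f x)).

(** * The representable cubical set box^n.
    Its k-cubes are the boxmaps cube k -> cube n.  Vertices are identified
    with subsets of {1..n} (here of 'I_n). *)
Definition vset (n : nat) (A : {set 'I_n}) : cube n := [ffun j => j \in A].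

Definition edge (n : nat) := cube 1 -> cube n.
Definition esrc n (e : edge n) : cube n := e [ffun => false].
Definition etgt n (e : edge n) : cube n := e [ffun => true].

(** A map I_m -> box^n is a sequence of m edges (1-cubes) glued end to
    start; [is_cpath u p v] says that p is such a map with initial vertex u
    and terminal vertex v. *)
Fixpoint is_cpath n (u : cube n) (p : seq (edge n)) (v : cube n) : Prop :=
  match p with
  | [::] => u = v
  | e :: p' => boxmap e /\ esrc e = u /\ is_cpath (etgt e) p' v
  end.

(** Precomposition with an endpoint-preserving map h : I_m -> I_m'.
    Such an h is a sequence of m edges of I_m', each either the next
    nondegenerate edge (true) or a degenerate edge at the current vertex
    (false), using exactly m' nondegenerate edges. [reparam u h q] is q o h,
    where u is the initial vertex of q. *)
Fixpoint reparam n (u : cube n) (h : seq bool) (q : seq (edge n)) : seq (edge n) :=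
  match h with
  | [::] => [::]
  | true :: h' =>
      match q with
      | e :: q' => e :: reparam (etgt e) h' q'
      | [::] => [::]
      end
  | false :: h' => (fun _ => u) :: reparam u h' q
  end.

Definition reparam_rel n (a b : {set 'I_n}) (p q : seq (edge n)) : Prop :=
  is_cpath (vset a) p (vset b) /\ is_cpath (vset a) q (vset b) /\
  exists h : seq bool, count id h = size q /\ p = reparam (vset a) h q.

Definition path_equiv n (a b : {set 'I_n}) : relation (seq (edge n)) :=
  clos_refl_sym_trans _ (@reparam_rel n a b).

(** [F o s_{k,m}] ~> [F o t_{k,m}] for endpoint-preserving F : II_{k,m} -> box^n.
    F consists of k edges, a 2-cube sq, and m-2-k edges, glued through the
    vertices emptyset and {1,2} of box^2. The edges of s are
    emptyset -> {2} -> {1,2}, of t are emptyset -> {1} -> {1,2}. *)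
Definition zero2 : cube 2 := [ffun => false].
Definition one2 : cube 2 := [ffun => true].

Definition elem_step n (a b : {set 'I_n}) (p q : seq (edge n)) : Prop :=
  exists (pre post : seq (edge n)) (sq : cube 2 -> cube n) (u w : cube n),
    is_cpath (vset a) pre u /\ boxmap sq /\ sq zero2 = u /\ sq one2 = w /\
    is_cpath w post (vset b) /\
    p = pre ++ [:: (fun x => sq (face ord0 false x));
                   (fun x => sq (face ord_max true x))] ++ post /\
    q = pre ++ [:: (fun x => sq (face ord_max false x));
                   (fun x => sq (face ord0 true x))] ++ post.

(* the preorder on the quotient, lifted to representatives *)
Definition leads n (a b : {set 'I_n}) : relation (seq (edge n)) :=
  clos_refl_trans _ (fun p q => path_equiv a b p q \/
    exists p0 q0, path_equiv a b p p0 /\ elem_step a b p0 q0 /\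
                  path_equiv a b q0 q).

Definition sigma n (A : {set 'I_n}) (s : seq 'I_n) : Prop :=
  uniq s /\ [set x in s] = A.

Definition bruhat_step n (s t : seq 'I_n) : Prop :=
  exists (s1 s2 : seq 'I_n) (x y : 'I_n),
    (y < x)%N /\ s = s1 ++ x :: y :: s2 /\ t = s1 ++ y :: x :: s2.

Definition bruhat n : relation (seq 'I_n) := clos_refl_trans _ (@bruhat_step n).

From mathcomp Require Import all_boot zify.
From Stdlib Require Import Relations FunctionalExtensionality.
Set Implicit Arguments. Unset Strict Implicit. Unset Printing Implicit Defensive.

(* A box map [1]^m -> [1]^n is a composite of faces, degeneracies and connections, and all
   three preserve the normal form in which output coordinate k is c_k \/ (\/_{s i = k} x_i),
   for a constant c and a monotone partial assignment s of input to output coordinates.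
   Hence an edge of box^n is either degenerate or raises a single coordinate, and a path from
   a to b is determined up to reparametrisation by the word of the coordinates it raises,
   which enumerates b \ a without repetition; every such word is realised by a canonical
   path.  A square raises at most two coordinates; when it raises two, monotonicity forces
   its boundary path s to raise the larger one first and its boundary path t the smaller one
   first, so the elementary steps of ~> are exactly the Bruhat steps x y ~> y x with x > y,
   and each Bruhat step is realised by a square of box^n.  Antisymmetry holds because each
   Bruhat step removes exactly one inversion. *)

(** * Normal form of box maps *)

Definition join_map m n (c : cube n) (s : 'I_m -> option 'I_n) (x : cube m) : cube n :=
  [ffun k => c k || [exists i, (s i == Some k) && x i]].

Definition pmonotone m n (s : 'I_m -> option 'I_n) :=
  forall (i j : 'I_m) (k l : 'I_n), (i < j)%N -> s i = Some k -> s j = Some l -> (k <= l)%N.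

Definition push n n' (g : 'I_n -> option 'I_n') (y : cube n) : cube n' :=
  [ffun j => [exists l, (g l == Some j) && y l]].

Lemma exists_eq_and (T : finType) (P : pred T) k : [exists i, (i == k) && P i] = P k.
Proof. by apply/existsP/idP => [[i /andP[/eqP-> //]]|Pk]; exists k; rewrite eqxx. Qed.

Lemma exists_split_lift n (h : 'I_n.+1) (P : pred 'I_n.+1) :
  [exists l, P l] = P h || [exists k, P (lift h k)].
Proof.
apply/existsP/orP => [[l]|[Ph|/existsP[k Pk]]]; [|by exists h|by exists (lift h k)].
by case: (unliftP h l) => [k ->|->] Pl; [right; apply/existsP; exists k|left].
Qed.

Lemma pmonotone_obind m n n' (s : 'I_m -> option 'I_n) (g : 'I_n -> option 'I_n') :
  pmonotone s -> pmonotone g -> pmonotone (fun i => obind g (s i)).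
Proof.
move=> s_mono g_mono i j a b ij.
case Ei: (s i) => [k|] //= gk; case Ej: (s j) => [l|] //= gl.
case: (ltngtP k l) (s_mono _ _ _ _ ij Ei Ej) => // [kl _|/val_inj kl _].
- exact: g_mono kl gk gl.
- by move: gk gl; rewrite kl => -> [->].
Qed.

Lemma push_join_map n n' (g : 'I_n -> option 'I_n') m c (s : 'I_m -> option 'I_n) x :
  push g (join_map c s x) = join_map (push g c) (fun i => obind g (s i)) x.
Proof.
apply/ffunP => j; rewrite !ffunE; apply/existsP/orP.
- case=> l; rewrite ffunE => /andP[gl /orP[cl|/existsP[i /andP[/eqP si xi]]]].
    by left; apply/existsP; exists l; rewrite gl.
  by right; apply/existsP; exists i; rewrite si /= gl.
- case=> [/existsP[l /andP[gl cl]]|/existsP[i]].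
    by exists l; rewrite ffunE gl cl.
  case Ei: (s i) => [l|] //= /andP[gl xi].
  by exists l; rewrite ffunE gl; apply/orP; right; apply/existsP; exists i; rewrite Ei eqxx.
Qed.

Lemma face_join_map n (i : 'I_n.+1) e m c (s : 'I_m -> option 'I_n) x :
  face i e (join_map c s x) = join_map (face i e c) (fun a => obind (Some \o lift i) (s a)) x.
Proof.
apply/ffunP => j; rewrite !ffunE; case: unliftP => [k ->|->]; rewrite ?ffunE.
- congr orb; apply: eq_existsb => a; case: (s a) => //= l.
  by rewrite !(inj_eq (@Some_inj _)) (inj_eq (@lift_inj _ i)).
- case: existsP => [[a]|]; last by rewrite orbF.
  by case: (s a) => //= l; rewrite (inj_eq (@Some_inj _)) eq_sym (negbTE (neq_lift _ _)).
Qed.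

Lemma degen_push n (i : 'I_n.+1) (y : cube n.+1) : degen i y = push (unlift i) y.
Proof.
apply/ffunP => k; rewrite !ffunE; apply/idP/existsP => [yk|[l /andP[/eqP]]].
  by exists (lift i k); rewrite liftK eqxx.
by case: unliftP => // l' -> [->].
Qed.

(* [conn i] merges the coordinates [i] and [i.+1] into [i]; this is its action on coordinates. *)
Definition conn_coord n (i : 'I_n.+1) (l : 'I_n.+2) : 'I_n.+1 :=
  odflt i (unlift (inord i.+1) l).

Lemma conn_push n (i : 'I_n.+1) (y : cube n.+2) : conn i y = push (Some \o conn_coord i) y.
Proof.
apply/ffunP => j; rewrite !ffunE (exists_split_lift (inord i.+1)) /conn_coord /= unlift_none.
under eq_existsb => k do rewrite liftK /=.
rewrite exists_eq_and (inj_eq (@Some_inj _)) eq_sym.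
case: eqVneq => [->|_] //=; rewrite orbC; congr (_ || y _); apply: val_inj.
by rewrite /= /bump !inordK //=; case: j => /= j ltjn; lia.
Qed.

Lemma conn_coord_mono n (i : 'I_n.+1) : {homo conn_coord i : k l / (k <= l)%N}.
Proof.
have iS : nat_of_ord (inord i.+1 : 'I_n.+2) = i.+1 by rewrite inordK // ltnS.
move=> k l; rewrite /conn_coord; case: unliftP => [k' ->|->]; case: unliftP => [l' ->|->] //=;
  rewrite ?leq_bump2 // /bump iS; lia.
Qed.

Lemma pmonotone_conn_coord n (i : 'I_n.+1) : pmonotone (fun l : 'I_n.+2 => Some (conn_coord i l)).
Proof. by move=> k l _ _ /ltnW kl [<-] [<-]; apply: conn_coord_mono. Qed.

Lemma pmonotone_unlift n (i : 'I_n.+1) : pmonotone (unlift i).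
Proof.
move=> k l a b; case: (unliftP i k) => // a' ->; case: (unliftP i l) => // b' ->.
by move=> /ltnW; rewrite /= leq_bump2 => ? [<-] [<-].
Qed.

Lemma boxmap_join_map m n f : @boxmap m n f ->
  exists c s, pmonotone s /\ forall x, f x = join_map c s x.
Proof.
elim=> {m n f} [n|m n i e f _ [c [s [s_mono fE]]]|m n i f _ [c [s [s_mono fE]]]
               |m n i f _ [c [s [s_mono fE]]]].
- exists [ffun=> false], Some; split; first by move=> i j k l /ltnW ij [<-] [<-].
  by move=> x; apply/ffunP => k; rewrite !ffunE /= exists_eq_and.
- exists (face i e c), (fun a => obind (Some \o lift i) (s a)); split.
    by apply: (pmonotone_obind s_mono) => k l _ _ /ltnW kl [<-] [<-]; rewrite /= leq_bump2.
  by move=> x; rewrite fE face_join_map.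
- exists (push (unlift i) c), (fun a => obind (unlift i) (s a)); split.
    exact: (pmonotone_obind s_mono (@pmonotone_unlift _ i)).
  by move=> x; rewrite fE degen_push push_join_map.
- exists (push (Some \o conn_coord i) c), (fun a => obind (Some \o conn_coord i) (s a)); split.
    exact: (pmonotone_obind s_mono (@pmonotone_conn_coord _ i)).
  by move=> x; rewrite fE conn_push push_join_map.
Qed.

Definition raise n (u : cube n) (s : seq 'I_n) : cube n := [ffun j => u j || (j \in s)].

Definition raise_edge n (u : cube n) (k : 'I_n) : edge n :=
  fun x => [ffun j => if j == k then x ord0 else u j].

Definition raise_square n (u : cube n) (y x : 'I_n) : cube 2 -> cube n :=
  fun z => [ffun j => if j == x then z ord_max else if j == y then z ord0 else u j].

Lemma raise0 n (u : cube n) : raise u [::] = u.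
Proof. by apply/ffunP => j; rewrite ffunE orbF. Qed.

Lemma raise_cat n (u : cube n) s t : raise (raise u s) t = raise u (s ++ t).
Proof. by apply/ffunP => j; rewrite !ffunE mem_cat orbA. Qed.

Lemma notin_raise n (u : cube n) s t : {in s ++ t, forall k, ~~ u k} -> uniq (s ++ t) ->
  {in t, forall k, ~~ raise u s k}.
Proof.
move=> ust; rewrite cat_uniq => /and3P[_ /hasPn st _] k kt.
by rewrite ffunE negb_or ust ?mem_cat ?kt ?orbT ?st.
Qed.

Lemma esrc_raise_edge n (u : cube n) k : ~~ u k -> esrc (raise_edge u k) = u.
Proof.
by move=> uk; apply/ffunP => j; rewrite /esrc !ffunE; case: eqVneq => // ->; apply/esym/negbTE.
Qed.

Lemma etgt_raise_edge n (u : cube n) k : etgt (raise_edge u k) = raise u [:: k].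
Proof. by apply/ffunP => j; rewrite !ffunE inE; case: eqVneq; rewrite ?orbT ?orbF. Qed.

Lemma face2E (i : 'I_2) e (z : cube 1) j : face i e z j = if j == i then e else z ord0.
Proof.
rewrite ffunE; case: unliftP => [k ->|->]; last by rewrite eqxx.
by rewrite (ord1 k) eq_sym (negbTE (neq_lift _ _)).
Qed.

Lemma raise_square_face0 n (w : cube n) y x e : ~~ w y ->
  (fun z => raise_square w y x (face ord0 e z)) = raise_edge (if e then raise w [:: y] else w) x.
Proof.
move=> wy; apply: functional_extensionality => z; apply/ffunP => j.
rewrite /raise_square !face2E !ffunE /=; case: eqVneq => // _.
by case: e; rewrite ?ffunE ?inE; case: eqVneq => [->|]; rewrite ?orbT ?orbF // (negbTE wy).
Qed.

Lemma raise_square_face1 n (w : cube n) y x e : x != y -> ~~ w x ->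
  (fun z => raise_square w y x (face ord_max e z)) = raise_edge (if e then raise w [:: x] else w) y.
Proof.
move=> xy wx; apply: functional_extensionality => z; apply/ffunP => j.
rewrite /raise_square !face2E !ffunE /=; case: (eqVneq j x) => [->|jx].
  by rewrite (negbTE xy); case: e; rewrite ?ffunE ?inE ?eqxx ?orbT // (negbTE wx).
by case: eqVneq => // _; case: e; rewrite ?ffunE ?inE ?(negbTE jx) ?orbF.
Qed.

Lemma raise_square_zero2 n (w : cube n) y x : ~~ w x -> ~~ w y -> raise_square w y x zero2 = w.
Proof.
move=> wx wy; apply/ffunP => j; rewrite !ffunE.
by case: eqVneq => [->|_]; [|case: eqVneq => [->|_]]; rewrite ?(negbTE wx) ?(negbTE wy).
Qed.

Lemma raise_square_one2 n (w : cube n) y x : raise_square w y x one2 = raise w [:: x; y].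
Proof.
apply/ffunP => j; rewrite !ffunE !inE.
by case: eqVneq => [->|_]; [|case: eqVneq => [->|_]]; rewrite ?orbT ?orbF.
Qed.

Lemma boxmap_peel m n (f : cube m -> cube n.+1) (j : 'I_n.+1) b :
  (forall x, f x j = b) -> boxmap (fun x => degen j (f x)) -> boxmap f.
Proof.
move=> fj fd; suff -> : f = fun x => face j b (degen j (f x)) by exact: bm_face.
apply: functional_extensionality => x; apply/ffunP => l; rewrite !ffunE.
by case: unliftP => [l' ->|->]; rewrite ?ffunE.
Qed.

Lemma boxmap_raise_edge n (u : cube n) k : boxmap (raise_edge u k).
Proof.
case: n u k => [|n] u k; first by case: k.
elim: n u k => [|n IH] u k.
  have -> : raise_edge u k = id.
    by apply: functional_extensionality => x; apply/ffunP => j; rewrite ffunE (ord1 j) (ord1 k).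
  exact: bm_id.
pose j := lift k ord0; have jk : j != k by rewrite eq_sym neq_lift.
apply: (boxmap_peel (j := j) (b := u j)) => [x|]; first by rewrite ffunE (negbTE jk).
case: (unliftP j k) => [k' kE|kE]; last by rewrite kE eqxx in jk.
have -> : (fun x => degen j (raise_edge u k x)) = raise_edge (degen j u) k'; last exact: IH.
apply: functional_extensionality => x; apply/ffunP => l.
by rewrite !ffunE kE (inj_eq (@lift_inj _ j)).
Qed.

Lemma ord2_cases (i : 'I_2) : i = ord0 \/ i = ord_max.
Proof. by case: i => [[|[|//]]] ?; [left|right]; apply: val_inj. Qed.

Lemma boxmap_raise_square n (u : cube n) (y x : 'I_n) : (y < x)%N -> boxmap (raise_square u y x).
Proof.
case: n u y x => [|[|n]] u y x yx; [by case: y yx|by rewrite (ord1 x) (ord1 y) in yx|].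
elim: n u y x yx => [|n IH] u y x yx.
  have [-> ->] : y = ord0 /\ x = ord_max by case: (ord2_cases y) (ord2_cases x) yx => -> [] ->.
  have -> : raise_square u ord0 ord_max = id.
    apply: functional_extensionality => z; apply/ffunP => j; rewrite ffunE.
    by case: (ord2_cases j) => ->.
  exact: bm_id.
case: (unliftP x y) => [y' yE|yE]; last by rewrite yE ltnn in yx.
pose j := lift x (lift y' ord0).
have jx : j != x by rewrite eq_sym neq_lift.
have jy : j != y by rewrite yE (inj_eq (@lift_inj _ x)) eq_sym neq_lift.
apply: (boxmap_peel (j := j) (b := u j)) => [z|]; first by rewrite ffunE (negbTE jx) (negbTE jy).
case: (unliftP j y) => [y'' {}yE|]; last by move/eqP; rewrite eq_sym (negbTE jy).
case: (unliftP j x) => [x' xE|]; last by move/eqP; rewrite eq_sym (negbTE jx).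
have -> : (fun z => degen j (raise_square u y x z)) = raise_square (degen j u) y'' x'.
  apply: functional_extensionality => z; apply/ffunP => l.
  by rewrite !ffunE xE yE !(inj_eq (@lift_inj _ j)).
by apply: IH; move: yx; rewrite xE yE /= !ltnNge leq_bump2.
Qed.

Definition flips n (e : edge n) : seq 'I_n := [seq k <- enum 'I_n | esrc e k != etgt e k].

Definition word n (p : seq (edge n)) : seq 'I_n := flatten (map (@flips n) p).

Fixpoint canon n (u : cube n) (s : seq 'I_n) : seq (edge n) :=
  if s is k :: s' then raise_edge u k :: canon (raise u [:: k]) s' else [::].

Lemma word_cons n (e : edge n) p : word (e :: p) = flips e ++ word p.
Proof. by []. Qed.

Lemma word_cat n (p q : seq (edge n)) : word (p ++ q) = word p ++ word q.
Proof. by rewrite /word map_cat flatten_cat. Qed.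

Lemma flips_const n (u : cube n) : flips (fun=> u) = [::].
Proof. by rewrite /flips (eq_filter (a2 := pred0)) ?filter_pred0 // => j /=; rewrite eqxx. Qed.

Lemma flips_raise_edge n (u : cube n) k : ~~ u k -> flips (raise_edge u k) = [:: k].
Proof.
move=> uk; rewrite /flips etgt_raise_edge esrc_raise_edge //.
rewrite (eq_filter (a2 := pred1 k)) ?filter_pred1_uniq ?enum_uniq ?mem_enum // => j /=.
by rewrite ffunE inE; case: (eqVneq j k) => [->|]; rewrite ?orbF ?orbT ?eqxx ?(negbTE uk).
Qed.

Lemma exists_ord1 (P : pred 'I_1) : [exists i, P i] = P ord0.
Proof. by apply/existsP/idP => [[i]|]; [rewrite (ord1 i)|exists ord0]. Qed.

Variant edge_spec n (e : edge n) : seq 'I_n -> Prop :=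
| EdgeDegenerate of e = (fun=> esrc e) : edge_spec e [::]
| EdgeRaise k of ~~ esrc e k & e = raise_edge (esrc e) k : edge_spec e [:: k].

Lemma edgeP n (e : edge n) : boxmap e -> edge_spec e (flips e).
Proof.
case/boxmap_join_map => c [s [_ eE]].
have srcE : esrc e = c by apply/ffunP => j; rewrite /esrc eE ffunE exists_ord1 ffunE andbF orbF.
have [[k sk ck]|eC] : (exists2 k, s ord0 = Some k & ~~ c k) \/ e = fun=> c.
- case Es: (s ord0) => [k|]; last first.
    right; apply: functional_extensionality => x; apply/ffunP => j.
    by rewrite eE ffunE exists_ord1 Es /= orbF.
  case Ck: (c k); last by left; exists k; rewrite ?Ck.
  right; apply: functional_extensionality => x; apply/ffunP => j.
  rewrite eE ffunE exists_ord1 Es (inj_eq (@Some_inj _)).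
  by case: eqVneq => [<-|]; rewrite ?Ck ?orbF.
- have eR : e = raise_edge c k.
    apply: functional_extensionality => x; apply/ffunP => j.
    rewrite eE !ffunE exists_ord1 sk (inj_eq (@Some_inj _)) eq_sym.
    by case: eqVneq => [->|]; rewrite ?orbF // (negbTE ck).
  have -> : flips e = [:: k] by rewrite eR flips_raise_edge.
  by apply: EdgeRaise; rewrite srcE.
- have -> : flips e = [::] by rewrite eC flips_const.
  by apply: EdgeDegenerate; rewrite srcE.
Qed.

Lemma canon_cat n (u : cube n) s t : canon u (s ++ t) = canon u s ++ canon (raise u s) t.
Proof. by elim: s u => [|k s IH] u /=; rewrite ?raise0 // IH raise_cat. Qed.

Lemma size_canon n (u : cube n) s : size (canon u s) = size s.
Proof. by elim: s u => //= k s IH u; rewrite IH. Qed.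

Lemma cpath_word n (u v : cube n) p : is_cpath u p v ->
  [/\ {in word p, forall k, ~~ u k}, uniq (word p) & v = raise u (word p)].
Proof.
elim: p u => [|e p IH] u /=; first by move=> ->; rewrite raise0.
case=> eb [<- /IH[IH1 IH2 ->]]; rewrite word_cons.
case: (edgeP eb) IH1 => [eC|k ek eR].
- have -> : etgt e = esrc e by rewrite {1}eC.
  by move=> IH1; split=> //= j /IH1.
- have -> : etgt e = raise (esrc e) [:: k] by rewrite {1}eR etgt_raise_edge.
  move=> IH1; split; last by rewrite raise_cat.
  + by move=> j; rewrite inE => /predU1P[-> //|/IH1]; rewrite ffunE => /norP[].
  + by rewrite /= IH2 andbT; apply/negP => /IH1; rewrite ffunE inE eqxx orbT.
Qed.

Lemma cpath_canon n (u : cube n) s : {in s, forall k, ~~ u k} -> uniq s ->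
  is_cpath u (canon u s) (raise u s) /\ word (canon u s) = s.
Proof.
elim: s u => [|k s IH] u /= su; first by rewrite raise0.
case/andP => ks /IH IHs; have uk : ~~ u k by apply: su; rewrite inE eqxx.
have [IH1 IH2] : is_cpath (raise u [:: k]) (canon (raise u [:: k]) s) (raise u (k :: s)) /\
                 word (canon (raise u [:: k]) s) = s.
  rewrite -[k :: s]/([:: k] ++ s) -raise_cat; apply: IHs => j js.
  rewrite ffunE inE negb_or su ?inE ?js ?orbT //=; by apply: contraNneq ks => <-.
split; last by rewrite word_cons flips_raise_edge // IH2.
by split; [exact: boxmap_raise_edge | rewrite esrc_raise_edge // etgt_raise_edge].
Qed.

Lemma word_reparam n (u : cube n) h q : count id h = size q -> word (reparam u h q) = word q.
Proof.
elim: h u q => [|[] h IH] u q /=; first by case: q.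
- by case: q => [|e q] //= [/IH wE]; rewrite !word_cons wE.
- by move=> /IH wE; rewrite word_cons flips_const wE.
Qed.

Lemma cpath_reparam n (u v : cube n) p : is_cpath u p v ->
  exists2 h, count id h = size (word p) & p = reparam u h (canon u (word p)).
Proof.
elim: p u => [|e p IH] u /=; first by exists [::].
case=> eb [<- /IH[h hc pE]]; rewrite word_cons.
case: (edgeP eb) => [eC|k ek eR].
- have tE : etgt e = esrc e by rewrite {1}eC.
  exists (false :: h) => //=; rewrite -tE -pE; congr (_ :: _).
  by rewrite tE {1}eC.
- have tE : etgt e = raise (esrc e) [:: k] by rewrite {1}eR etgt_raise_edge.
  exists (true :: h) => /=; first by rewrite hc.
  by rewrite etgt_raise_edge -tE -pE -eR.
Qed.

Definition boundary_s n (sq : cube 2 -> cube n) : seq (edge n) :=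
  [:: fun x => sq (face ord0 false x); fun x => sq (face ord_max true x)].

Definition boundary_t n (sq : cube 2 -> cube n) : seq (edge n) :=
  [:: fun x => sq (face ord_max false x); fun x => sq (face ord0 true x)].

Lemma exists_ord2 (P : pred 'I_2) : [exists i, P i] = P ord0 || P ord_max.
Proof.
apply/existsP/orP => [[i]|[Pi|Pi]]; [|by exists ord0|by exists ord_max].
by case: (ord2_cases i) => ->; [left|right].
Qed.

Lemma filter_enum_some n (o : option 'I_n) (P : pred 'I_n) :
  [seq k <- enum 'I_n | (o == Some k) && P k] =
  if o is Some k then (if P k then [:: k] else [::]) else [::].
Proof.
case: o => [k|]; last by rewrite (eq_filter (a2 := pred0)) ?filter_pred0.
case: ifP => Pk; [rewrite (eq_filter (a2 := pred1 k)) ?filter_pred1_uniq ?enum_uniq ?mem_enum //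
                 |rewrite (eq_filter (a2 := pred0)) ?filter_pred0 //];
  by move=> j /=; rewrite (inj_eq (@Some_inj _)) eq_sym; case: eqVneq => // ->; rewrite Pk.
Qed.

Lemma word_boundary n (sq : cube 2 -> cube n) : boxmap sq ->
  word (boundary_s sq) = word (boundary_t sq) \/
  bruhat_step (word (boundary_s sq)) (word (boundary_t sq)).
Proof.
case/boxmap_join_map => c [s [s_mono sqE]].
have sqk z k : sq z k = c k || (s ord0 == Some k) && z ord0 || (s ord_max == Some k) && z ord_max.
  by rewrite sqE ffunE exists_ord2 orbA.
have flipsE (e : edge n) (d P : pred 'I_n) : (forall z k, e z k = d k || P k && z ord0) ->
    flips e = [seq k <- enum 'I_n | P k && ~~ d k].
  move=> eE; apply: eq_filter => k; rewrite /= !eE !ffunE andbF andbT orbF.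
  by case: (d k); case: (P k).
rewrite /word /= !cats0.
rewrite (flipsE _ c (fun k => s ord_max == Some k)); last first.
  by move=> z k; rewrite sqk !face2E /= andbF orbF.
rewrite (flipsE _ (fun k => c k || (s ord_max == Some k)) (fun k => s ord0 == Some k)); last first.
  by move=> z k; rewrite sqk !face2E /= andbT orbAC.
rewrite (flipsE _ c (fun k => s ord0 == Some k)); last first.
  by move=> z k; rewrite sqk !face2E /= andbF orbF.
rewrite (flipsE _ (fun k => c k || (s ord0 == Some k)) (fun k => s ord_max == Some k)); last first.
  by move=> z k; rewrite sqk !face2E /= andbT.
rewrite !filter_enum_some.
case E0: (s ord0) => [k0|]; case E1: (s ord_max) => [k1|] /=; last 3 first.
- by left; rewrite (_ : None == Some k0 = false) // orbF cats0.
- by left; rewrite (_ : None == Some k1 = false) // orbF cats0.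
- by left.
rewrite !(inj_eq (@Some_inj _)) eq_sym.
case: eqVneq => [->|k01]; first by left.
case: (c k0); case: (c k1); rewrite /= ?cats0; try by left.
right; exists [::], [::], k1, k0; split => //.
by rewrite ltn_neqAle val_eqE k01 (s_mono ord0 ord_max).
Qed.

(** * The weak Bruhat order *)

Fixpoint inversions n (s : seq 'I_n) : nat :=
  if s is x :: s' then count (fun y : 'I_n => (y < x)%N) s' + inversions s' else 0.

Lemma inversions_step n (s t : seq 'I_n) : bruhat_step s t -> inversions s = (inversions t).+1.
Proof.
case=> s1 [s2 [x [y [yx [-> ->]]]]]; elim: s1 => [|z s1 IH] /=.
  by rewrite yx ltnNge ltnW //=; lia.
by rewrite IH !count_cat /=; lia.
Qed.

Lemma bruhat_inversions n (s t : seq 'I_n) : bruhat s t -> s = t \/ (inversions t < inversions s)%N.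
Proof.
elim=> {s t} [s t /inversions_step ->|s|s t u _ [-> //|ts] _ [<-|ut]]; [by right|by left|by right|].
by right; apply: ltn_trans ut ts.
Qed.

Lemma bruhat_antisym n (s t : seq 'I_n) : bruhat s t -> bruhat t s -> s = t.
Proof.
move=> /bruhat_inversions[// | ts] /bruhat_inversions[// | st].
by have := ltn_trans ts st; rewrite ltnn.
Qed.

Lemma bruhat_step_cat n (s t u v : seq 'I_n) :
  bruhat_step s t -> bruhat_step (u ++ s ++ v) (u ++ t ++ v).
Proof.
case=> s1 [s2 [x [y [yx [-> ->]]]]].
by exists (u ++ s1), (s2 ++ v), x, y; rewrite !catA -!cat_cons !catA.
Qed.

Lemma sigma_bruhat_step n (A : {set 'I_n}) s t : bruhat_step s t -> sigma A s -> sigma A t.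
Proof.
case=> s1 [s2 [x [y [_ [-> ->]]]]] [su sA].
have st : perm_eq (s1 ++ x :: y :: s2) (s1 ++ y :: x :: s2).
  by rewrite perm_cat2l -[x :: y :: s2]/([:: x] ++ [:: y] ++ s2) perm_catCA.
by split; [rewrite -(perm_uniq st) | rewrite -sA; apply/setP => j; rewrite !inE (perm_mem st)].
Qed.

Lemma sigma_bruhat n (A : {set 'I_n}) s t : bruhat s t -> sigma A s -> sigma A t.
Proof.
elim=> {s t} [s t|//|s t u _ IHst _ IHtu /IHst/IHtu //].
exact: sigma_bruhat_step.
Qed.

Section PathsInCube.
Variables (n : nat) (a b : {set 'I_n}).

Lemma reparam_rel_canon p : is_cpath (vset a) p (vset b) ->
  reparam_rel a b p (canon (vset a) (word p)).
Proof.
move=> pab; have [wa wu bE] := cpath_word pab; have [h hc pE] := cpath_reparam pab.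
split=> //; split; first by rewrite bE; case: (cpath_canon wa wu).
by exists h; rewrite size_canon.
Qed.

Lemma path_equiv_word p q : path_equiv a b p q -> word p = word q.
Proof. by elim=> // [x y [_ [_ [h [hc ->]]]]|x y z _ -> _ ->] //; apply: word_reparam. Qed.

Lemma path_equivP p q : is_cpath (vset a) p (vset b) -> is_cpath (vset a) q (vset b) ->
  path_equiv a b p q <-> word p = word q.
Proof.
move=> pab qab; split; first exact: path_equiv_word.
move=> pq; apply: rst_trans (rst_step _ _ _ _ (reparam_rel_canon pab)) _.
by rewrite pq; apply/rst_sym/rst_step/reparam_rel_canon.
Qed.

Lemma sigma_word p : is_cpath (vset a) p (vset b) -> sigma (b :\: a) (word p).
Proof.
case/cpath_word => wa wu /ffunP bE; split=> //; apply/setP => j.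
move: (bE j) (wa j); rewrite !ffunE !inE => -> /=.
by case: (j \in word p) => [/(_ isT)/negbTE ->|_]; rewrite ?orbF ?andNb.
Qed.

Lemma elem_step_bruhat p q : elem_step a b p q -> bruhat (word p) (word q).
Proof.
case=> pre [post [sq [u [w [_ [sqb [_ [_ [_ [-> ->]]]]]]]]]].
rewrite !word_cat; case: (word_boundary sqb) => [st|st].
- by rewrite -[word [:: _; _]]/(word (boundary_s sq)) st; apply: rt_refl.
- exact/rt_step/bruhat_step_cat.
Qed.

Lemma leads_bruhat p q : leads a b p q -> bruhat (word p) (word q).
Proof.
elim=> {p q} [p q [/path_equiv_word -> | [p0 [q0 [/path_equiv_word -> [/elem_step_bruhat]]]]]
             | p | p q r _ pq _ qr].
- exact: rt_refl.
- by move=> st /path_equiv_word <-.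
- exact: rt_refl.
- exact: rt_trans pq qr.
Qed.

Hypothesis ab : a \subset b.

Lemma sigma_raise s : sigma (b :\: a) s ->
  [/\ {in s, forall k, ~~ vset a k}, uniq s & raise (vset a) s = vset b].
Proof.
case=> su sE; have sba j : (j \in s) = (j \in b :\: a) by rewrite -sE inE.
split=> // [k|]; first by rewrite sba ffunE inE => /andP[].
apply/ffunP => j; rewrite !ffunE sba inE.
by case: (boolP (j \in a)) => [/(subsetP ab) ->|].
Qed.

Lemma cpath_canon_sigma s : sigma (b :\: a) s ->
  is_cpath (vset a) (canon (vset a) s) (vset b) /\ word (canon (vset a) s) = s.
Proof. by case/sigma_raise => sa su <-; apply: cpath_canon. Qed.

Lemma bruhat_step_elem s t : sigma (b :\: a) s -> bruhat_step s t ->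
  elem_step a b (canon (vset a) s) (canon (vset a) t).
Proof.
move=> /sigma_raise[sa su sb] [s1 [s2 [x [y [yx [sE tE]]]]]]; subst s t.
set w := raise (vset a) s1.
have xy : x != y by rewrite -val_eqE /= gtn_eqF.
have wxy : {in x :: y :: s2, forall k, ~~ w k} by apply: notin_raise.
have wx : ~~ w x by apply: wxy; rewrite inE eqxx.
have wy : ~~ w y by apply: wxy; rewrite !inE eqxx orbT.
have wyx : raise w [:: y; x] = raise w [:: x; y].
  by apply/ffunP => j; rewrite !ffunE; congr (_ || _); rewrite !inE orbC.
exists (canon (vset a) s1), (canon (raise w [:: x; y]) s2), (raise_square w y x), w,
  (raise w [:: x; y]); split.
  have [] // := @cpath_canon _ (vset a) s1 => [k ks|].
    by apply: sa; rewrite mem_cat ks.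
  by move: su; rewrite cat_uniq => /and3P[].
split; first exact: boxmap_raise_square.
split; first exact: raise_square_zero2.
split; first exact: raise_square_one2.
split.
  rewrite -sb -[s1 ++ _]/(s1 ++ [:: x; y] ++ s2) catA -raise_cat.
  have [] // := @cpath_canon _ (raise (vset a) (s1 ++ [:: x; y])) s2; rewrite ?raise_cat //.
  - by apply: notin_raise => [k|]; rewrite -catA //; apply: sa.
  - by move: su; rewrite cat_uniq => /and3P[_ _ /and3P[]].
rewrite raise_square_face0 // raise_square_face1 // raise_square_face0 // raise_square_face1 //=.
by split; rewrite -[_ :: _ :: s2]/([:: _; _] ++ s2) !canon_cat ?wyx.
Qed.

Lemma bruhat_leads_canon s t : sigma (b :\: a) s -> bruhat s t ->
  leads a b (canon (vset a) s) (canon (vset a) t).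
Proof.
move=> + st; elim: st => {s t} [s t st sig|s _|s t u st IHst _ IHtu sig].
- apply/rt_step; right; exists (canon (vset a) s), (canon (vset a) t).
  by split; [exact: rst_refl | split; [exact: bruhat_step_elem | exact: rst_refl]].
- exact: rt_refl.
- exact: rt_trans (IHst sig) (IHtu (sigma_bruhat st sig)).
Qed.

Lemma bruhat_leads p q : is_cpath (vset a) p (vset b) -> is_cpath (vset a) q (vset b) ->
  bruhat (word p) (word q) -> leads a b p q.
Proof.
move=> pab qab /(bruhat_leads_canon (sigma_word pab)) pq.
have pc := rst_step _ _ _ _ (reparam_rel_canon pab).
have qc := rst_step _ _ _ _ (reparam_rel_canon qab).
apply: rt_trans (rt_step _ _ _ _ (or_introl pc)) _.
exact: rt_trans pq (rt_step _ _ _ _ (or_introl (rst_sym _ _ _ _ qc))).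
Qed.

End PathsInCube.

Theorem proposition2p14 (n : nat) :
  exists Phi : {set 'I_n} -> {set 'I_n} -> seq (edge n) -> seq 'I_n,
    (forall a b : {set 'I_n}, a \subset b ->
       (* Phi maps paths a -> b into Sigma_{b \ a} *)
       (forall p, is_cpath (vset a) p (vset b) -> sigma (b :\: a) (Phi a b p)) /\
       (* well defined and injective on equivalence classes *)
       (forall p q, is_cpath (vset a) p (vset b) -> is_cpath (vset a) q (vset b) ->
          (path_equiv a b p q <-> Phi a b p = Phi a b q)) /\
       (* surjective *)
       (forall s, sigma (b :\: a) s ->
          exists p, is_cpath (vset a) p (vset b) /\ Phi a b p = s) /\
       (* an order isomorphism onto the weak Bruhat order *)
       (forall p q, is_cpath (vset a) p (vset b) -> is_cpath (vset a) q (vset b) ->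
          (leads a b p q <-> bruhat (Phi a b p) (Phi a b q))) /\
       (* consequently ~> is a partial order on classes *)
       (forall p q, is_cpath (vset a) p (vset b) -> is_cpath (vset a) q (vset b) ->
          leads a b p q -> leads a b q p -> path_equiv a b p q)) /\
    (* compatibility with concatenation *)
    (forall a b c : {set 'I_n}, a \subset b -> b \subset c ->
       forall p q, is_cpath (vset a) p (vset b) -> is_cpath (vset b) q (vset c) ->
         Phi a c (p ++ q) = Phi a b p ++ Phi b c q).
Proof.
exists (fun _ _ p => word p); split; last by move=> a b c _ _ p q _ _; apply: word_cat.
move=> a b ab; split; first exact: sigma_word.
split; first exact: path_equivP.
split; first by move=> s /(cpath_canon_sigma ab)[cp cs]; exists (canon (vset a) s).
split; first by move=> p q pab qab; split; [exact: leads_bruhat | exact: bruhat_leads].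
move=> p q pab qab pq qp; apply/(path_equivP pab qab).
exact: bruhat_antisym (leads_bruhat pq) (leads_bruhat qp).
Qed.
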